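(* Let $(X,d)$ be a metric space and let $u,u_1,u_2,\ldots\in F_{USC}(X)$. Then: (i) $H_{\rm send}(u_n,u)\to0$ if and only if $H_{\rm end}(u_n,u)\to0$ and $H([u_n]_0,[u]_0)\to0$; (ii) ${\rm send}\,u_n$ Kuratowski converges to ${\rm send}\,u$ if and only if $u_n\stackrel{\Gamma}{\longrightarrow}u$ and $[u_n]_0$ Kuratowski converges to $[u]_0$.
   Context: A fuzzy set on $X$ is a function $u:X\to[0,1]$, with $\alpha$-cuts $[u]_\alpha=\{x: u(x)\ge\alpha\}$ for $\alpha\in(0,1]$ and $[u]_0=\overline{\{u>0\}}$. $F_{USC}(X)$ is the set of fuzzy sets with all $\alpha$-cuts ($\alpha\in[0,1]$) non-empty and closed. $X\times[0,1]$ is metrized by $\overline{d}((x,\alpha),(y,\beta))=d(x,y)+|\alpha-\beta|$. For non-empty closed sets $U,V$ in a metric space, $H(U,V)=\max\{\sup_{a\in U}\inf_{b\in V}\rho(a,b),\sup_{b\in V}\inf_{a\in U}\rho(a,b)\}$ is the Hausdorff distance ($\rho=d$ on $X$, $\rho=\overline{d}$ on $X\times[0,1]$). ${\rm end}\,u=\{(x,t)\in X\times[0,1]: u(x)\ge t\}$, ${\rm send}\,u={\rm end}\,u\cap([u]_0\times[0,1])$, $H_{\rm end}(u,v)=H({\rm end}\,u,{\rm end}\,v)$, $H_{\rm send}(u,v)=H({\rm send}\,u,{\rm send}\,v)$. For sets $C_n$: $\liminf_n C_n=\{x: x=\lim_n x_n, x_n\in C_n\}$, $\limsup_n C_n=\{x: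 x=\lim_j x_{n_j}, x_{n_j}\in C_{n_j}\}$; $C_n$ Kuratowski converges to $C$ if $C=\liminf_n C_n=\limsup_n C_n$. $u_n\stackrel{\Gamma}{\longrightarrow}u$ means ${\rm end}\,u_n$ Kuratowski converges to ${\rm end}\,u$. *)

From HB Require Import structures.
From mathcomp Require Import all_boot all_order all_algebra.
From mathcomp Require Import all_classical all_reals all_analysis.
Set Implicit Arguments. Unset Strict Implicit. Unset Printing Implicit Defensive.
Import Order.TTheory GRing.Theory Num.Theory.
Local Open Scope classical_set_scope.
Local Open Scope ring_scope.

Section Defs.
Variable R : realType.

Definition is_metric (X : Type) (d : X -> X -> R) : Prop :=
  [/\ forall x y, d x y = 0 <-> x = y,
      forall x y, d x y = d y x &
      forall x y z, d x z <= d x y + d y z].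

Definition mclosure (T : Type) (rho : T -> T -> R) (A : set T) : set T :=
  [set x | forall e : R, 0 < e -> exists2 y, A y & rho x y < e].

Definition mclosed (T : Type) (rho : T -> T -> R) (A : set T) : Prop :=
  mclosure rho A `<=` A.

Definition cut (X : Type) (u : X -> R) (a : R) : set X := [set x | a <= u x].
Definition cut0 (X : Type) (d : X -> X -> R) (u : X -> R) : set X :=
  mclosure d [set x | 0 < u x].

Definition FUSC (X : Type) (d : X -> X -> R) (u : X -> R) : Prop :=
  [/\ forall x, 0 <= u x <= 1,
      cut0 d u !=set0, mclosed d (cut0 d u) &
      forall a, 0 < a <= 1 -> cut u a !=set0 /\ mclosed d (cut u a)].

(* metric dbar on X * [0,1] (represented in X * R) *)
Definition dbar (X : Type) (d : X -> X -> R) (p q : X * R) : R :=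
  d p.1 q.1 + `|p.2 - q.2|.

Definition endo (X : Type) (u : X -> R) : set (X * R) :=
  [set p | 0 <= p.2 <= 1 /\ p.2 <= u p.1].

Definition sendo (X : Type) (d : X -> X -> R) (u : X -> R) : set (X * R) :=
  endo u `&` [set p | cut0 d u p.1 /\ 0 <= p.2 <= 1].

Definition hexcess (T : Type) (rho : T -> T -> R) (U V : set T) : \bar R :=
  ereal_sup [set ereal_inf [set (rho a b)%:E | b in V] | a in U].

Definition hausdorff (T : Type) (rho : T -> T -> R) (U V : set T) : \bar R :=
  Order.max (hexcess rho U V) (hexcess rho V U).

Definition mcvg (T : Type) (rho : T -> T -> R) (x : nat -> T) (l : T) : Prop :=
  forall e : R, 0 < e -> exists N : nat, forall n, (N <= n)%N -> rho (x n) l < e.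

Definition kliminf (T : Type) (rho : T -> T -> R) (C : nat -> set T) : set T :=
  [set l | exists x : nat -> T, (forall n, C n (x n)) /\ mcvg rho x l].

Definition klimsup (T : Type) (rho : T -> T -> R) (C : nat -> set T) : set T :=
  [set l | exists (phi : nat -> nat) (x : nat -> T),
     (forall j, (phi j < phi j.+1)%N) /\ (forall j, C (phi j) (x j)) /\ mcvg rho x l].

Definition kuratowski (T : Type) (rho : T -> T -> R) (C : nat -> set T) (A : set T) : Prop :=
  A = kliminf rho C /\ A = klimsup rho C.

End Defs.

From HB Require Import structures.
From mathcomp Require Import all_boot all_order all_algebra.
From mathcomp Require Import all_classical all_reals all_analysis.
From mathcomp Require Import lra.
Import Order.TTheory GRing.Theory Num.Theory.
Set Implicit Arguments. Unset Strict Implicit. Unset Printing Implicit Defensive.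
Local Open Scope classical_set_scope.
Local Open Scope ring_scope.

(* send v coincides with end v at positive levels, while its level-0 slice is
   [v]_0 x {0} and that of end v is all of X x {0}.  Every comparison of send
   with end and [.]_0 therefore splits on whether the level involved is
   positive: positive levels are handled by end, level 0 by [.]_0 (or by the
   point itself, for end).  In the Kuratowski limits a positive limit level is
   eventually positive along the sequence, because levels converge. *)

Section ExtendedCvg0.
Variable R : realType.

Lemma ge0_cvge0P (f : nat -> \bar R) : (forall n, 0 <= f n)%E ->
  f @ \oo --> 0%:E <->
  forall e : R, 0 < e -> \forall n \near \oo, (f n <= e%:E)%E.
Proof.
move=> f_ge0; split.
- move=> /fine_cvgP[f_fin /cvgrPdist_le f_cvg] e e_gt0.
  apply: filterS2 f_fin (f_cvg e e_gt0) => n /=; rewrite sub0r normrN.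
  by case: (f n) => [r| |] //= _; rewrite lee_fin => /(le_trans (ler_norm r)).
- move=> f_small; apply/fine_cvgP; split.
  + apply: filterS (f_small 1 ltr01) => n fn_le1.
    by rewrite ge0_fin_numE // (le_lt_trans fn_le1) ?ltry.
  + apply/cvgrPdist_le => e e_gt0; apply: filterS (f_small e e_gt0) => n /=.
    rewrite sub0r normrN.
    case: (f n) (f_ge0 n) => [r| |] //=.
    by rewrite !lee_fin => r_ge0; rewrite ger0_norm.
Qed.

End ExtendedCvg0.

Section Hausdorff.
Variables (R : realType) (T : Type) (rho : T -> T -> R).
Implicit Types U V : set T.

Lemma hexcess_le U V e :
  (forall a, U a -> exists2 b, V b & rho a b < e) ->
  (hexcess rho U V <= e%:E)%E.
Proof.
move=> close; apply: ge_ereal_sup => _ [a Ua <-].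
have [b Vb ab_lt] := close a Ua.
apply: (@le_trans _ _ (rho a b)%:E); last by rewrite lee_fin ltW.
by apply: ereal_inf_lbound; exists b.
Qed.

Lemma hexcess_lt_witness U V e a :
  (hexcess rho U V < e%:E)%E -> U a -> exists2 b, V b & rho a b < e.
Proof.
move=> exc_lt Ua.
have : (ereal_inf [set (rho a b)%:E | b in V] < e%:E)%E.
  by apply: le_lt_trans exc_lt; apply: ereal_sup_ubound; exists a.
by move/ereal_inf_lt => [_ [b Vb <-]]; rewrite lte_fin; exists b.
Qed.

Lemma hausdorff_ge0 U V : (forall x y, 0 <= rho x y) -> U !=set0 ->
  (0 <= hausdorff rho U V)%E.
Proof.
move=> rho_ge0 [a Ua]; rewrite /hausdorff le_max; apply/orP; left.
apply: le_trans (ereal_sup_ubound _); last by exists a.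
by apply: le_ereal_inf_tmp => _ [b _ <-]; rewrite lee_fin.
Qed.

End Hausdorff.

Section Kuratowski.
Variables (R : realType) (T : Type) (rho : T -> T -> R).
Implicit Types (C : nat -> set T) (A : set T).

Lemma kliminf_sub_klimsup C : kliminf rho C `<=` klimsup rho C.
Proof. by move=> l [x [Cx x_cvg]]; exists id, x. Qed.

Lemma kuratowskiP C A :
  kuratowski rho C A <-> klimsup rho C `<=` A /\ A `<=` kliminf rho C.
Proof.
split=> [[A_inf A_sup]|[sup_sub sub_inf]].
  by split; [rewrite -A_sup | rewrite -A_inf].
have inf_sub_sup := @kliminf_sub_klimsup C.
split; apply/seteqP; split=> //.
- exact: subset_trans inf_sub_sup sup_sub.
- exact: subset_trans sub_inf inf_sub_sup.
Qed.

Lemma kliminfS C C' :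
  (forall n, C n `<=` C' n) -> kliminf rho C `<=` kliminf rho C'.
Proof. by move=> CC' l [x [Cx x_cvg]]; exists x; split => // n; apply: CC'. Qed.

Lemma kliminf_near C x l : (forall n, C n !=set0) ->
  (\forall n \near \oo, C n (x n)) -> mcvg rho x l -> kliminf rho C l.
Proof.
move=> C_neq0 [N _ Cx] x_cvg; have [w Cw] := choice C_neq0.
exists (fun n => if (N <= n)%N then x n else w n); split.
  by move=> n; case: ifPn => [/Cx|].
move=> e e_gt0; have [M xM] := x_cvg e e_gt0.
by exists (maxn N M) => n; rewrite geq_max => /andP[-> /xM].
Qed.

Lemma klimsup_near C (phi : nat -> nat) x l :
  (forall j, (phi j < phi j.+1)%N) ->
  (\forall j \near \oo, C (phi j) (x j)) -> mcvg rho x l -> klimsup rho C l.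
Proof.
move=> phi_incr [N _ Cx] x_cvg.
exists (fun j => phi (j + N)%N), (fun j => x (j + N)%N); split; [|split].
- by move=> j /=; rewrite addSn.
- by move=> j; apply: Cx; rewrite /= leq_addl.
- move=> e e_gt0; have [M xM] := x_cvg e e_gt0.
  by exists M => n n_ge; apply: xM; rewrite (leq_trans n_ge) ?leq_addr.
Qed.

End Kuratowski.

Section FuzzySets.
Variables (R : realType) (X : Type) (d : X -> X -> R).
Hypothesis d_metric : is_metric d.

Lemma metric_xx x : d x x = 0.
Proof. by case: d_metric => d0 _ _; apply/d0. Qed.

Lemma metric_ge0 x y : 0 <= d x y.
Proof.
have [_ dC d_tri] := d_metric; have := d_tri x y x.
by rewrite metric_xx (dC y x); lra.
Qed.

Lemma dbar_ge0 p q : 0 <= dbar d p q.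
Proof. by rewrite addr_ge0 ?metric_ge0. Qed.

Lemma dbar_level0 x y : dbar d (x, 0) (y, 0) = d x y.
Proof. by rewrite /dbar subrr normr0 addr0. Qed.

Lemma cut0_gt0 (v : X -> R) x : 0 < v x -> cut0 d v x.
Proof. by move=> vx_gt0 e e_gt0; exists x; rewrite ?metric_xx. Qed.

Lemma endo_level0 (v : X -> R) x : (forall x, 0 <= v x) -> endo v (x, 0).
Proof. by move=> v_ge0; split; rewrite /= ?lexx ?ler01 ?v_ge0. Qed.

Lemma sendo_level0 (v : X -> R) x : (forall x, 0 <= v x) -> cut0 d v x ->
  sendo d v (x, 0).
Proof.
by move=> v_ge0 x_cut; split; [exact: endo_level0 | rewrite /= lexx ler01].
Qed.

Lemma endo_sendo_gt0 (v : X -> R) p : 0 < p.2 -> endo v p -> sendo d v p.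
Proof.
move=> p_gt0 [p01 pv]; split=> //; split=> //.
exact/cut0_gt0/(lt_le_trans p_gt0).
Qed.

Lemma sendo_neq0 (v : X -> R) : (forall x, 0 <= v x) -> cut0 d v !=set0 ->
  sendo d v !=set0.
Proof. by move=> v_ge0 [x x_cut]; exists (x, 0); apply: sendo_level0. Qed.

Lemma mcvg_fst (p : nat -> X * R) l :
  mcvg (dbar d) p l -> mcvg d (fst \o p) l.1.
Proof.
move=> p_cvg e e_gt0; have [N pN] := p_cvg e e_gt0.
by exists N => n /pN; apply: le_lt_trans; rewrite lerDl.
Qed.

Lemma mcvg_snd (p : nat -> X * R) l :
  mcvg (dbar d) p l -> (fun n => (p n).2) @ \oo --> (l.2 : R^o).
Proof.
move=> p_cvg; apply/cvgrPdist_lt => e e_gt0; have [N pN] := p_cvg e e_gt0.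
by exists N => // n /pN; apply: le_lt_trans; rewrite distrC lerDr metric_ge0.
Qed.

Lemma mcvg_level0 (x : nat -> X) y :
  mcvg d x y -> mcvg (dbar d) (fun n => (x n, 0)) (y, 0).
Proof.
move=> x_cvg e e_gt0; have [N xN] := x_cvg e e_gt0.
by exists N => n; rewrite dbar_level0; apply: xN.
Qed.

Section Excess.
Variables (v u : X -> R) (e : R).
Hypothesis (u_ge0 : forall x, 0 <= u x).

Lemma hexcess_endo_le : 0 < e ->
  (hexcess (dbar d) (sendo d v) (sendo d u) < e%:E)%E ->
  (hexcess (dbar d) (endo v) (endo u) <= e%:E)%E.
Proof.
move=> e_gt0 exc_lt; apply: hexcess_le => -[x t] xt_endo.
have [/andP[t_ge0 _] _] := xt_endo.
move: t_ge0; rewrite le0r => /predU1P[/= ->|t_gt0].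
  by exists (x, 0); rewrite ?dbar_level0 ?metric_xx //; apply: endo_level0.
have xt_sendo := endo_sendo_gt0 t_gt0 xt_endo.
by have [q [q_endo _] xq_lt] := hexcess_lt_witness exc_lt xt_sendo; exists q.
Qed.

Lemma hexcess_cut0_le : (forall x, 0 <= v x) ->
  (hexcess (dbar d) (sendo d v) (sendo d u) < e%:E)%E ->
  (hexcess d (cut0 d v) (cut0 d u) <= e%:E)%E.
Proof.
move=> v_ge0 exc_lt; apply: hexcess_le => x x_cut.
have x0_sendo := sendo_level0 v_ge0 x_cut.
have [[y s] [_ [y_cut _]] xy_lt] := hexcess_lt_witness exc_lt x0_sendo.
by exists y => //; apply: le_lt_trans xy_lt; rewrite lerDl.
Qed.

(* If the end-neighbour of (x, t) lies at level 0, then t itself is below the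
   end-excess, so (x, t) is matched by (y', 0) with y' in [u]_0 near x. *)
Lemma hexcess_sendo_le : 0 < e ->
  (hexcess (dbar d) (endo v) (endo u) < e%:E)%E ->
  (hexcess d (cut0 d v) (cut0 d u) < e%:E)%E ->
  (hexcess (dbar d) (sendo d v) (sendo d u) <= (e + e)%:E)%E.
Proof.
move=> e_gt0 end_lt cut0_lt; apply: hexcess_le => -[x t] [xt_endo [/= x_cut _]].
have [[y s] ys_endo xy_lt] := hexcess_lt_witness end_lt xt_endo.
have [/andP[s_ge0 _] _] := ys_endo.
move: s_ge0; rewrite le0r => /predU1P[/= s0|s_gt0].
- have [y' y'_cut xy'_lt] := hexcess_lt_witness cut0_lt x_cut.
  exists (y', 0); first exact: sendo_level0.
  rewrite /dbar /= ltrD // -s0; apply: le_lt_trans xy_lt.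
  by rewrite lerDr metric_ge0.
- exists (y, s); first exact: endo_sendo_gt0.
  by rewrite (lt_trans xy_lt) // ltrDl.
Qed.

End Excess.

Section Convergence.
Variables (u : X -> R) (us : nat -> X -> R).
Hypotheses (u_ge0 : forall x, 0 <= u x) (us_ge0 : forall n x, 0 <= us n x).
Hypothesis cut0_us_neq0 : forall n, cut0 d (us n) !=set0.

Local Notation sends := (fun n => sendo d (us n)).
Local Notation ends := (fun n => endo (us n)).
Local Notation cut0s := (fun n => cut0 d (us n)).

Lemma hausdorff_sendo_cvg0P :
  (fun n => hausdorff (dbar d) (sends n) (sendo d u)) @ \oo --> 0%:E <->
  (fun n => hausdorff (dbar d) (ends n) (endo u)) @ \oo --> 0%:E /\
  (fun n => hausdorff d (cut0s n) (cut0 d u)) @ \oo --> 0%:E.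
Proof.
have sends_ge0 n : (0 <= hausdorff (dbar d) (sends n) (sendo d u))%E.
  exact/(hausdorff_ge0 _ dbar_ge0)/sendo_neq0.
have ends_ge0 n : (0 <= hausdorff (dbar d) (ends n) (endo u))%E.
  have [x _] := cut0_us_neq0 n.
  by apply: (hausdorff_ge0 _ dbar_ge0); exists (x, 0); apply: endo_level0.
have cut0s_ge0 n : (0 <= hausdorff d (cut0s n) (cut0 d u))%E.
  exact: (hausdorff_ge0 _ metric_ge0).
rewrite (ge0_cvge0P sends_ge0) (ge0_cvge0P ends_ge0) (ge0_cvge0P cut0s_ge0).
split=> [sends_cvg | [ends_cvg cut0s_cvg]].
- have half_near (e : R) : 0 < e -> \forall n \near \oo,
      (hausdorff (dbar d) (sends n) (sendo d u) < e%:E)%E.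
    move=> e_gt0; have e2_gt0 : 0 < e / 2 by rewrite divr_gt0.
    apply: filterS (sends_cvg _ e2_gt0) => n /le_lt_trans; apply.
    by rewrite lte_fin; lra.
  split=> e e_gt0; apply: filterS (half_near e e_gt0) => n;
    rewrite /hausdorff gt_max ge_max => /andP[exc_lt exc_gt].
  + by rewrite (hexcess_endo_le u_ge0) ?(hexcess_endo_le (us_ge0 n)).
  + by rewrite (hexcess_cut0_le (us_ge0 n)) ?(hexcess_cut0_le u_ge0).
- move=> e e_gt0; have e2_gt0 : 0 < e / 2 by rewrite divr_gt0.
  have e4_gt0 : 0 < e / 4 by rewrite divr_gt0.
  have e4_lt : ((e / 4)%:E < (e / 2)%:E)%E by rewrite lte_fin; lra.
  apply: filterS2 (ends_cvg _ e4_gt0) (cut0s_cvg _ e4_gt0) => n.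
  rewrite /hausdorff !ge_max.
  move=> /andP[/le_lt_trans/(_ e4_lt) end_lt /le_lt_trans/(_ e4_lt) end_gt].
  move=> /andP[/le_lt_trans/(_ e4_lt) cut0_lt /le_lt_trans/(_ e4_lt) cut0_gt].
  by rewrite (splitr e) (hexcess_sendo_le u_ge0) ?(hexcess_sendo_le (us_ge0 n)).
Qed.

Lemma klimsup_endo_sub : klimsup (dbar d) sends `<=` sendo d u ->
  klimsup (dbar d) ends `<=` endo u.
Proof.
move=> sup_sendo [x t] [phi [p [phi_incr [p_endo p_cvg]]]].
have t_cvg : (fun n => (p n).2) @ \oo --> (t : R^o) := mcvg_snd p_cvg.
have t_ge0 : 0 <= t.
  by apply: (cvgr_to_ge t_cvg); apply: nearW => n; case: (p_endo n) => /andP[].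
move: t_ge0; rewrite le0r => /predU1P[->|t_gt0]; first exact: endo_level0.
suff [] : sendo d u (x, t) by [].
apply: sup_sendo; apply: (klimsup_near phi_incr _ p_cvg).
apply: filterS (cvgr_gt _ t_cvg _ t_gt0) => j /= pj_gt0.
exact: endo_sendo_gt0 pj_gt0 (p_endo j).
Qed.

Lemma endo_sub_kliminf : sendo d u `<=` kliminf (dbar d) sends ->
  endo u `<=` kliminf (dbar d) ends.
Proof.
move=> sendo_inf [x t] xt_endo; have [/andP[t_ge0 _] _] := xt_endo.
move: t_ge0; rewrite le0r => /predU1P[/= ->|t_gt0].
- exists (fun=> (x, 0)); split=> [n|]; first exact: endo_level0.
  by apply: mcvg_level0 => e e_gt0; exists 0%N => n _; rewrite metric_xx.
- apply: (@kliminfS _ _ _ sends); first by move=> n p [].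
  exact/sendo_inf/endo_sendo_gt0.
Qed.

Lemma klimsup_cut0_sub : klimsup (dbar d) sends `<=` sendo d u ->
  klimsup d cut0s `<=` cut0 d u.
Proof.
move=> sup_sendo x [phi [y [phi_incr [y_cut y_cvg]]]].
suff [_ []] : sendo d u (x, 0) by [].
apply: sup_sendo; exists phi, (fun j => (y j, 0)); do 2?split => //.
  by move=> j; apply: sendo_level0.
exact: mcvg_level0.
Qed.

Lemma cut0_sub_kliminf : sendo d u `<=` kliminf (dbar d) sends ->
  cut0 d u `<=` kliminf d cut0s.
Proof.
move=> sendo_inf x x_cut.
have [p [p_sendo p_cvg]] := sendo_inf _ (sendo_level0 u_ge0 x_cut).
exists (fst \o p); split; last exact: mcvg_fst p_cvg.
by move=> n; case: (p_sendo n) => _ [].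
Qed.

Lemma klimsup_sendo_sub : klimsup (dbar d) ends `<=` endo u ->
  klimsup d cut0s `<=` cut0 d u -> klimsup (dbar d) sends `<=` sendo d u.
Proof.
move=> sup_endo sup_cut0 [x t] [phi [p [phi_incr [p_sendo p_cvg]]]].
have [xt01 xtu] : endo u (x, t).
  apply: sup_endo; exists phi, p; do 2?split => //.
  by move=> j; case: (p_sendo j).
have x_cut : cut0 d u x.
  apply: sup_cut0; exists phi, (fst \o p); do 2?split => //.
    by move=> j; case: (p_sendo j) => _ [].
  exact: mcvg_fst p_cvg.
by do 2?split.
Qed.

Lemma sendo_sub_kliminf : endo u `<=` kliminf (dbar d) ends ->
  cut0 d u `<=` kliminf d cut0s -> sendo d u `<=` kliminf (dbar d) sends.
Proof.
move=> endo_inf cut0_inf [x t] [xt_endo [/= x_cut /andP[t_ge0 _]]].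
move: t_ge0; rewrite le0r => /predU1P[->|t_gt0].
- have [y [y_cut y_cvg]] := cut0_inf x x_cut.
  exists (fun n => (y n, 0)); split; last exact: mcvg_level0.
  by move=> n; apply: sendo_level0.
- have [p [p_endo p_cvg]] := endo_inf _ xt_endo.
  apply: (kliminf_near _ _ p_cvg) => [n|]; first exact: sendo_neq0.
  apply: filterS (cvgr_gt _ (mcvg_snd p_cvg) _ t_gt0) => n /= pn_gt0.
  exact: endo_sendo_gt0 pn_gt0 (p_endo n).
Qed.

Lemma kuratowski_sendoP :
  kuratowski (dbar d) sends (sendo d u) <->
  kuratowski (dbar d) ends (endo u) /\ kuratowski d cut0s (cut0 d u).
Proof.
rewrite !kuratowskiP; split=> [[sup inf]|[[sup_e inf_e] [sup_c inf_c]]].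
- split; split.
  + exact: klimsup_endo_sub.
  + exact: endo_sub_kliminf.
  + exact: klimsup_cut0_sub.
  + exact: cut0_sub_kliminf.
- by split; [apply: klimsup_sendo_sub | apply: sendo_sub_kliminf].
Qed.

End Convergence.

End FuzzySets.

Theorem proposition4p2 (R : realType) (X : Type) (d : X -> X -> R)
  (u : X -> R) (us : nat -> X -> R) :
  is_metric d -> FUSC d u -> (forall n, FUSC d (us n)) ->
  ((fun n => hausdorff (dbar d) (sendo d (us n)) (sendo d u)) @ \oo --> 0%:E
    <->
   ((fun n => hausdorff (dbar d) (endo (us n)) (endo u)) @ \oo --> 0%:E /\
    (fun n => hausdorff d (cut0 d (us n)) (cut0 d u)) @ \oo --> 0%:E))
  /\
  (kuratowski (dbar d) (fun n => sendo d (us n)) (sendo d u)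
    <->
   (kuratowski (dbar d) (fun n => endo (us n)) (endo u) /\
    kuratowski d (fun n => cut0 d (us n)) (cut0 d u))).
Proof.
move=> d_metric [u01 _ _ _] us_FUSC.
have u_ge0 x : 0 <= u x by case/andP: (u01 x).
have us_ge0 n x : 0 <= us n x.
  by case: (us_FUSC n) => us01 _ _ _; case/andP: (us01 x).
have cut0_us_neq0 n : cut0 d (us n) !=set0 by case: (us_FUSC n).
split.
- exact: hausdorff_sendo_cvg0P.
- exact: kuratowski_sendoP.
Qed.
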